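(* Let $\mathcal M$ be the class of multilayer networks with $d$ aspects having a common vertex set $L_0$ and common elementary-layer sets $L_1,\dots,L_d$, and let $p\subseteq\{0,\dots,d\}$ be nonempty. Then for all $M,M'\in\mathcal M$, $$\mathrm{Iso}_p(M,M')=\{\boldsymbol\zeta\in P_p : g_p^M(\boldsymbol\zeta)\in\mathrm{Iso}(f_p(M),f_p(M'))\}.$$
   Context: A multilayer network with $d$ aspects is $M=(V_M,E_M,V,\mathbf L)$ with $\mathbf L=(L_1,\dots,L_d)$, $V_M\subseteq V\times L_1\times\dots\times L_d$, $E_M\subseteq V_M\times V_M$; write $L_0=V$ and $\mathbf v=(v_0,\dots,v_d)$. It is assumed that the sets $L_0,\dots,L_d$ are pairwise disjoint and that no tuple in $L_0\times\dots\times L_d$ belongs to any $L_a$. For nonempty $p\subseteq\{0,\dots,d\}$, $P_p=D_0\times\dots\times D_d$ with $D_a=S_{L_a}$ (symmetric group) if $a\in p$ and $D_a=\{1_{L_a}\}$ otherwise. For $\boldsymbol\zeta\in P_p$, $\mathbf v^{\boldsymbol\zeta}=(\zeta_0(v_0),\dots,\zeta_d(v_d))$ and $M^{\boldsymbol\zeta}=(\{\mathbf v^{\boldsymbol\zeta}:\mathbf v\in V_M\},\{(\mathbf v^{\boldsymbol\zeta},\mathbf u^{\boldsymbol\zeta}):(\mathbf v,\mathbf u)\in E_M\},V,\mathbf L)$; $\mathrm{Iso}_p(M,M')=\{\boldsymbol\zeta\in P_p:M^{\boldsymbol\zeta}=M'\}$. A vertex-colored graph is $G=(V_c,E_c,\pi,C)$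 with $E_c\subseteq V_c\times V_c$ and $\pi:V_c\to C$. For a bijection $\gamma:V_c\to V_c'$, $G^\gamma=(\gamma(V_c),\{(\gamma(v),\gamma(u)):(v,u)\in E_c\},\pi\circ\gamma^{-1},C)$, and $\mathrm{Iso}(G,G')$ is the set of bijections $\gamma$ from the vertex set of $G$ to that of $G'$ with $G^\gamma=G'$. Let $\overline p=\{0,\dots,d\}\setminus p=\{\overline p_1<\dots<\overline p_m\}$. Define $f_p(M)=(V_G,E_G,\pi,C)$ by: $V_G=V_M\cup\bigcup_{a\in p}L_a$; $E_G=E_M\cup\{(v_a,\mathbf v):\mathbf v\in V_M,\ a\in p\}$; $C=p\cup(L_{\overline p_1}\times\dots\times L_{\overline p_m})$; $\pi(x)=a$ if $x\in L_a$ with $a\in p$, and $\pi(\mathbf v)=(v_{\overline p_1},\dots,v_{\overline p_m})$ if $\mathbf v\in V_M$. For $\boldsymbol\zeta\in P_p$, let $g_p^M(\boldsymbol\zeta)$ be the bijection from $V_G$ (the vertex set of $f_p(M)$) to the vertex set of $f_p(M^{\boldsymbol\zeta})$ given by $\mathbf v\mapsto\mathbf v^{\boldsymbol\zeta}$ for $\mathbf v\in V_M$ and $x\mapsto\zeta_a(x)$ for $x\in L_a$, $a\in p$. *)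

From mathcomp Require Import all_boot.
From mathcomp Require Import classical_sets.
Set Implicit Arguments. Unset Strict Implicit. Unset Printing Implicit Defensive.
Local Open Scope classical_set_scope.

Section Multilayer.
(* d aspects: layers L_0 (= V), L_1, ..., L_d indexed by 'I_d.+1 *)
Variables (d : nat) (L : 'I_d.+1 -> Type).

Definition tup := forall a : 'I_d.+1, L a.

Record mnet := MNet { VM : set tup; EM : set (tup * tup) }.

Definition mnet_wf (M : mnet) : Prop :=
  forall u v, EM M (u, v) -> VM M u /\ VM M v.

Definition perms := forall a : 'I_d.+1, L a -> L a.

Definition inP (p : {set 'I_d.+1}) (z : perms) : Prop :=
  (forall a, bijective (z a)) /\ (forall a, a \notin p -> z a = id).

Definition tact (z : perms) (v : tup) : tup := fun a => z a (v a).

Definition mact (M : mnet) (z : perms) : mnet :=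
  MNet (tact z @` VM M)
       ((fun e : tup * tup => (tact z e.1, tact z e.2)) @` EM M).

Definition Iso_p (p : {set 'I_d.+1}) (M M' : mnet) : set perms :=
  [set z | inP p z /\ mact M z = M'].

Record cgraph (Vt C : Type) := CGraph
  { cV : set Vt; cE : set (Vt * Vt); cpi : Vt -> C }.

(* gamma is a bijection from the vertex set of G onto that of G' with
   G^gamma = G' (componentwise: gamma(V) = V', gamma(E) = E',
   pi o gamma^-1 = pi' on V'; the color set C is common). *)
Definition Iso (Vt C : Type) (G G' : cgraph Vt C) : set (Vt -> Vt) :=
  [set g | (forall x y, cV G x -> cV G y -> g x = g y -> x = y)
           /\ g @` cV G = cV G'
           /\ (fun e : Vt * Vt => (g e.1, g e.2)) @` cE G = cE G'
           /\ (forall x, cV G x -> cpi G' (g x) = cpi G x)].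

(* ambient vertex type of f_p(M): tuples (elements of V_M) or elements of
   some L_a (tagged by a), a disjoint union as assumed in the paper *)
Definition vert := (tup + {a : 'I_d.+1 & L a})%type.

(* colors: C = p  \cup  prod_{a \notin p} L_a *)
Definition color (p : {set 'I_d.+1}) :=
  ('I_d.+1 + (forall a : {a : 'I_d.+1 | a \notin p}, L (val a)))%type.

Definition fpi (p : {set 'I_d.+1}) (x : vert) : color p :=
  match x with
  | inl v => inr (fun a => v (val a))
  | inr (existT a _) => inl a
  end.

Definition f_p (p : {set 'I_d.+1}) (M : mnet) : cgraph vert (color p) :=
  CGraph
    ((@inl tup _) @` VM M `|` [set x | exists a (y : L a), a \in p /\ x = inr (existT _ a y)])
    ((fun e : tup * tup => (inl e.1, inl e.2)) @` EM M `|`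
       [set e | exists v a, VM M v /\ a \in p /\ e = (inr (existT _ a (v a)), inl v)])
    (@fpi p).

(* g_p^M(zeta) (as a map on the ambient vertex type; only its restriction
   to the vertex set of f_p(M) matters) *)
Definition g_p (z : perms) (x : vert) : vert :=
  match x with
  | inl v => inl (tact z v)
  | inr (existT a y) => inr (existT _ a (z a y))
  end.

End Multilayer.

(** The color of a vertex of [f_p(M)] records whether it is a tuple or an
    element of some [L_a], and [g_p(zeta)] maps tuples to tuples and [L_a] to
    [L_a].  Hence [g_p(zeta)] is always injective and color preserving for
    [zeta] in [P_p], it maps [f_p(M)] onto [f_p(M^zeta)], and [M] can be read
    back from the tuple part of [f_p(M)].  So [g_p(zeta)] is an isomorphism
    [f_p(M) -> f_p(M')] exactly when [f_p(M^zeta) = f_p(M')], i.e. when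
    [M^zeta = M']. *)
From mathcomp Require Import all_boot.
From mathcomp Require Import classical_sets.
From mathcomp Require boolp.
From Stdlib Require Import Eqdep_dec.
Local Open Scope classical_set_scope.

Section FlatteningMultilayer.
Variables (d : nat) (L : 'I_d.+1 -> Type).

Lemma existT_layer_inj (a : 'I_d.+1) (x y : L a) :
  existT L a x = existT L a y -> x = y.
Proof. by apply: inj_pair2_eq_dec; exact: eq_comparable. Qed.

Lemma tact_inj (z : perms L) : (forall a, injective (z a)) -> injective (tact z).
Proof.
move=> zI v w /(congr1 (fun u => u _)) vw.
by apply: boolp.functional_extensionality_dep => a; apply: (zI a); exact: vw.
Qed.

Lemma g_p_inj (z : perms L) : (forall a, injective (z a)) -> injective (g_p z).
Proof.
move=> zI [v|[a x]] [w|[b y]] //= E.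
- by case: E => /(tact_inj _ zI) ->.
- have {}E : existT L a (z a x) = existT L b (z b y) by case: E.
  have /= ab := congr1 (@projT1 _ _) E; subst b.
  by move/existT_layer_inj: E => /zI ->.
Qed.

Lemma g_p_color (p : {set 'I_d.+1}) (z : perms L) :
  (forall a, a \notin p -> z a = id) -> forall x, fpi p (g_p z x) = fpi p x.
Proof.
move=> zid [v|[a x]] //=; congr inr.
by apply: boolp.functional_extensionality_dep => -[a ap] /=; rewrite /tact zid.
Qed.

Lemma g_p_vertices (p : {set 'I_d.+1}) (M : mnet L) (z : perms L) :
  (forall a, bijective (z a)) ->
  g_p z @` cV (f_p p M) = cV (f_p p (mact M z)).
Proof.
move=> zB; apply/seteqP; split => x /=.
- move=> [y [[v Mv <-]|[a [u [ap ->]]]] <-].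
  + by left; exists (tact z v) => //; exists v.
  + by right; exists a, (z a u).
- move=> [[w [v Mv <-] <-]|[a [y [ap ->]]]].
  + by exists (inl v) => //; left; exists v.
  + have [g gK Kg] := zB a.
    exists (inr (existT L a (g y))); first by right; exists a, (g y).
    by rewrite /= Kg.
Qed.

Lemma g_p_edges (p : {set 'I_d.+1}) (M : mnet L) (z : perms L) :
  (fun e : vert L * vert L => (g_p z e.1, g_p z e.2)) @` cE (f_p p M)
  = cE (f_p p (mact M z)).
Proof.
apply/seteqP; split => x /=.
- move=> [e [[[v w] Mvw <-]|[v [a [Mv [ap ->]]]]] <-].
  + by left; exists (tact z v, tact z w) => //; exists (v, w).
  + by right; exists (tact z v), a; split=> //; exists v.
- move=> [[e [[v w] Mvw <-] <-]|[u [a [[v Mv <-] [ap ->]]]]].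
  + by exists (inl v, inl w) => //; left; exists (v, w).
  + by exists (inr (existT L a (v a)), inl v) => //; right; exists v, a.
Qed.

Lemma Iso_g_p (p : {set 'I_d.+1}) (M : mnet L) (z : perms L) :
  inP p z -> Iso (f_p p M) (f_p p (mact M z)) (g_p z).
Proof.
move=> [zB zid]; split; last split; last split.
- move=> x y _ _; apply: g_p_inj => a.
  exact: bij_inj.
- exact: g_p_vertices.
- exact: g_p_edges.
- by move=> x _ /=; rewrite g_p_color.
Qed.

Lemma VM_f_p (p : {set 'I_d.+1}) (M : mnet L) :
  VM M = [set v | cV (f_p p M) (inl v)].
Proof.
apply/seteqP; split => v /=; first by left; exists v.
by case=> [[w Mw [<-]]|[a [x [_ //]]]].
Qed.

Lemma EM_f_p (p : {set 'I_d.+1}) (M : mnet L) :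
  EM M = [set e | cE (f_p p M) (inl e.1, inl e.2)].
Proof.
apply/seteqP; split => -[v w] /=; first by left; exists (v, w).
by case=> [[[v' w'] Mvw [<- <-]]|[u [a [_ [_ //]]]]].
Qed.

Lemma mnet_eq_f_p (p : {set 'I_d.+1}) (M N : mnet L) :
  cV (f_p p M) = cV (f_p p N) -> cE (f_p p M) = cE (f_p p N) -> M = N.
Proof.
have mnetE (K : mnet L) : K = MNet (VM K) (EM K) by case: K.
move=> eV eE; rewrite [M]mnetE [N]mnetE.
by rewrite (VM_f_p p M) (VM_f_p p N) (EM_f_p p M) (EM_f_p p N) eV eE.
Qed.

End FlatteningMultilayer.

Theorem theorem1 (d : nat) (L : 'I_d.+1 -> Type) (p : {set 'I_d.+1})
  (Hp : p != finset.set0) (M M' : mnet L) (wfM : mnet_wf M) (wfM' : mnet_wf M') :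
  Iso_p p M M' = [set z | inP p z /\ Iso (f_p p M) (f_p p M') (g_p z)].
Proof.
apply/seteqP; split => z /=.
- by move=> [zP <-]; split=> //; exact: Iso_g_p.
- move=> [zP [_ [eV [eE _]]]]; split=> //.
  apply: (@mnet_eq_f_p _ _ p).
  + by rewrite -eV g_p_vertices //; case: zP.
  + by rewrite -eE g_p_edges.
Qed.
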